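(* Let $N\ge 1$ be the number of users, indexed $1,\dots,N$. For each user $i$ let $\mathbf{x}_i$ be an observed feature vector and let $\phi(\mathbf{x}_i,\ell)\in\mathbb{R}$ be given for $\ell\in\{0,1\}$. For each pair $i<j$ let $\mathbf{z}_{i,j}$ be an observed relationship vector (write $\mathbf{z}_{j,i}=\mathbf{z}_{i,j}$) and let $\psi(\mathbf{z}_{i,j},a,b)\in\mathbb{R}$ be given for $a,b\in\{0,1\}$, where $a$ refers to user $i$ and $b$ to user $j$. Assume: (i) if there is no observed relationship between users $i$ and $j$, then $\psi(\mathbf{z}_{i,j},a,b)=0$ for all $a,b\in\{0,1\}$; (ii) for every pair $i<j$, $\psi(\mathbf{z}_{i,j},1,1)=0\le \psi(\mathbf{z}_{i,j},0,0)\le \psi(\mathbf{z}_{i,j},0,1)$ and $\psi(\mathbf{z}_{i,j},0,0)\le \psi(\mathbf{z}_{i,j},1,0)$. Consider the optimization problem $$\min_{\mathbf{L}\in\{0,1\}^N}\ E(\mathbf{L}),\qquad E(\mathbf{L})=\sum_{i=1}^N\phi(\mathbf{x}_i,\ell_i)+\sum_{i<j}\psi(\mathbf{z}_{i,j},\ell_i,\ell_j).$$ Define the Energy Graph as the directed graph with node set $\{s,t,u_1,\dots,u_N\}$ and edges with capacities: - for each $i$, an edge $(u_i,t)$ with capacity $\phi(\mathbf{x}_i,1)$; - for each $i$, an edge $(s,u_i)$ with capacity $\phi(\mathbf{x}_i,0)+\tfrac12\sum_{j\ne i}\psi(\mathbf{z}_{i,j},0,0)$; - for each pair $i<j$ with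 an observed relationship, edges $(u_i,u_j)$ with capacity $\psi(\mathbf{z}_{i,j},1,0)-\tfrac12\psi(\mathbf{z}_{i,j},0,0)$ and $(u_j,u_i)$ with capacity $\psi(\mathbf{z}_{i,j},0,1)-\tfrac12\psi(\mathbf{z}_{i,j},0,0)$. Then the optimal solutions of the optimization problem correspond exactly to minimum capacity $s$-$t$ cuts of the Energy Graph: if $(S,T)$ is a minimum capacity $s$-$t$ cut and $\mathbf{L}^\star$ is defined by $\ell^\star_i=1$ if $u_i\in S$ and $\ell^\star_i=0$ if $u_i\in T$, then $\mathbf{L}^\star$ minimizes $E$, and the minimum value of $E$ equals the minimum cut capacity.
   Context: This models classification of social media users as in a target location ($\ell_i=1$) or not ($\ell_i=0$); $\phi$ is the ''profile energy'' and $\psi$ the ''link energy''. An $s$-$t$ cut is a partition of the node set into $S\ni s$ and $T\ni t$; its capacity is the sum of capacities of all edges directed from a node of $S$ to a node of $T$. *)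

From HB Require Import structures.
From mathcomp Require Import all_boot all_order all_algebra.
Set Implicit Arguments. Unset Strict Implicit. Unset Printing Implicit Defensive.
Import Order.TTheory GRing.Theory Num.Theory.
Local Open Scope ring_scope.

(* Labels l in {0,1} are encoded as bool: true = 1 (in target location), false = 0.
   Nodes of the Energy Graph: inl true = s, inl false = t, inr i = u_i. *)
Definition node (N : nat) : finType := (bool + 'I_N)%type.
Definition src_node {N : nat} : node N := inl true.
Definition snk_node {N : nat} : node N := inl false.
Definition unode {N : nat} (i : 'I_N) : node N := inr i.

Section Energy.
Variables (R : realFieldType) (N : nat) (X Z : Type).
Variables (x : 'I_N -> X) (phi : X -> bool -> R).
Variables (z : 'I_N -> 'I_N -> Z) (psi : Z -> bool -> bool -> R).
Variable (obs : 'I_N -> 'I_N -> bool).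

Definition energy (L : 'I_N -> bool) : R :=
  \sum_(i < N) phi (x i) (L i)
  + \sum_(i < N) \sum_(j < N | (i < j)%N) psi (z i j) (L i) (L j).

Definition pair_edges (i j : 'I_N) : seq (node N * node N * R) :=
  [:: (unode i, unode j, psi (z i j) true false - 2^-1 * psi (z i j) false false);
      (unode j, unode i, psi (z i j) false true - 2^-1 * psi (z i j) false false)].

(* Directed edges (tail, head, capacity) of the Energy Graph (a list, as multigraph). *)
Definition energy_graph : seq (node N * node N * R) :=
  [seq (unode i, snk_node, phi (x i) true) | i <- enum 'I_N]
  ++ [seq (src_node, unode i,
           phi (x i) false + 2^-1 * \sum_(j < N | j != i) psi (z i j) false false)
     | i <- enum 'I_N]
  ++ flatten [seq pair_edges ij.1 ij.2
             | ij : ('I_N * 'I_N)%type <- enum [pred ij : ('I_N * 'I_N)%type | (ij.1 < ij.2)%N && obs ij.1 ij.2]].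
End Energy.

Definition is_st_cut (N : nat) (S : {set node N}) : Prop :=
  src_node \in S /\ snk_node \notin S.

Definition cut_capacity (R : realFieldType) (N : nat)
  (G : seq (node N * node N * R)) (S : {set node N}) : R :=
  \sum_(e <- G | (e.1.1 \in S) && (e.1.2 \notin S)) e.2.

Definition is_min_st_cut (R : realFieldType) (N : nat)
  (G : seq (node N * node N * R)) (S : {set node N}) : Prop :=
  is_st_cut S /\
  forall S' : {set node N}, is_st_cut S' -> cut_capacity G S <= cut_capacity G S'.

From HB Require Import structures.
From mathcomp Require Import all_boot all_order all_algebra.
From mathcomp Require Import ring.
Set Implicit Arguments. Unset Strict Implicit. Unset Printing Implicit Defensive.
Import Order.TTheory GRing.Theory Num.Theory.
Local Open Scope ring_scope.

(* Every s-t cut S, read as the labelling l_i = [u_i \in S], has capacity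
   exactly E(l), and every labelling arises from some cut.  Hence minimum cuts
   and minimisers of E correspond, with equal values.  The identity
   cut capacity = energy is checked term by term: the unary terms come from
   the terminal edges, and each pair potential psi_ij with psi_ij(1,1) = 0
   splits as half of psi_ij(0,0) charged to each endpoint labelled 0 (carried
   by the source edges) plus the cost of the two edges between u_i and u_j. *)

Lemma sum_offdiag_pairs (V : nmodType) (N : nat) (g : 'I_N -> 'I_N -> V) :
  \sum_(i < N) \sum_(j < N | j != i) g i j
  = \sum_(i < N) \sum_(j < N | (i < j)%N) (g i j + g j i).
Proof.
have split_neq i : \sum_(j < N | j != i) g i j
    = \sum_(j < N | (i < j)%N) g i j + \sum_(j < N | (j < i)%N) g i j.
  rewrite (bigID (fun j : 'I_N => (i < j)%N)) /=.
  by congr (_ + _); apply: eq_bigl => j; rewrite -(inj_eq val_inj) /= eq_sym; case: ltngtP.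
rewrite (eq_bigr _ (fun i _ => split_neq i)) big_split /=.
rewrite [X in _ + X](exchange_big_dep xpredT) //= -big_split /=.
by apply: eq_bigr => i _; rewrite big_split.
Qed.

Definition pair_cut_cost (R : numFieldType) (f : bool -> bool -> R) (a b : bool) : R :=
  (if a && ~~ b then f true false - 2^-1 * f false false else 0)
  + (if b && ~~ a then f false true - 2^-1 * f false false else 0).

Lemma pair_potential_split (R : numFieldType) (f : bool -> bool -> R) (a b : bool) :
  f true true = 0 ->
  f a b = (if a then 0 else 2^-1 * f false false)
          + (if b then 0 else 2^-1 * f false false) + pair_cut_cost f a b.
Proof. by move=> f11; case: a; case: b; rewrite /pair_cut_cost /= ?f11; field. Qed.

Section CutCapacity.
Variables (R : realFieldType) (N : nat).
Implicit Types (G : seq (node N * node N * R)) (S : {set node N}).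

Lemma cut_capacity_cat G1 G2 S :
  cut_capacity (G1 ++ G2) S = cut_capacity G1 S + cut_capacity G2 S.
Proof. by rewrite /cut_capacity big_cat. Qed.

Lemma cut_capacity_sink_edges (c : 'I_N -> R) S : snk_node \notin S ->
  cut_capacity [seq (unode i, snk_node, c i) | i <- enum 'I_N] S
  = \sum_(i < N) (if unode i \in S then c i else 0).
Proof.
move=> snkS; rewrite /cut_capacity big_map big_mkcond enumT /=.
by apply: eq_bigr => i _; rewrite snkS andbT.
Qed.

Lemma cut_capacity_source_edges (c : 'I_N -> R) S : src_node \in S ->
  cut_capacity [seq (src_node, unode i, c i) | i <- enum 'I_N] S
  = \sum_(i < N) (if unode i \in S then 0 else c i).
Proof.
move=> srcS; rewrite /cut_capacity big_map big_mkcond enumT /=.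
by apply: eq_bigr => i _; rewrite srcS; case: (unode i \in S).
Qed.

Lemma cut_capacity_flatten_pairs (P : 'I_N -> 'I_N -> bool)
    (g : 'I_N -> 'I_N -> seq (node N * node N * R)) S :
  cut_capacity (flatten [seq g ij.1 ij.2 | ij : ('I_N * 'I_N)%type
                          <- enum [pred ij : ('I_N * 'I_N)%type | P ij.1 ij.2]]) S
  = \sum_(i < N) \sum_(j < N | P i j) cut_capacity (g i j) S.
Proof.
rewrite /cut_capacity big_flatten big_map big_enum pair_big_dep /=.
by apply: eq_bigl => ij; rewrite inE.
Qed.

End CutCapacity.

Definition cut_labels (N : nat) (S : {set node N}) : 'I_N -> bool :=
  fun i => unode i \in S.

Definition labels_cut (N : nat) (L : 'I_N -> bool) : {set node N} :=
  [set v : node N | match v with inl b => b | inr i => L i end].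

Lemma labels_cut_st (N : nat) (L : 'I_N -> bool) : is_st_cut (labels_cut L).
Proof. by split; rewrite inE. Qed.

Lemma labels_cutK (N : nat) (L : 'I_N -> bool) : cut_labels (labels_cut L) =1 L.
Proof. by move=> i; rewrite /cut_labels inE. Qed.

Section EnergyCut.
Variables (R : realFieldType) (N : nat) (X Z : Type).
Variables (x : 'I_N -> X) (phi : X -> bool -> R).
Variables (z : 'I_N -> 'I_N -> Z) (psi : Z -> bool -> bool -> R).
Variable (obs : 'I_N -> 'I_N -> bool).

Lemma eq_energy (L L' : 'I_N -> bool) :
  L =1 L' -> energy x phi z psi L = energy x phi z psi L'.
Proof.
move=> eqL; rewrite /energy; congr (_ + _); apply: eq_bigr => i _; rewrite ?eqL //.
by apply: eq_bigr => j _; rewrite !eqL.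
Qed.

Lemma cut_capacity_pair_edges (S : {set node N}) (i j : 'I_N) :
  cut_capacity (pair_edges z psi i j) S
  = pair_cut_cost (psi (z i j)) (unode i \in S) (unode j \in S).
Proof.
rewrite /cut_capacity /pair_edges !big_cons big_nil /pair_cut_cost /=.
by case: (unode i \in S); case: (unode j \in S); rewrite /= ?addr0 ?add0r.
Qed.

Hypothesis z_sym : forall i j : 'I_N, z j i = z i j.
Hypothesis psi_unobserved : forall i j : 'I_N, (i < j)%N -> ~~ obs i j ->
  forall a b : bool, psi (z i j) a b = 0.
Hypothesis psi11 : forall i j : 'I_N, (i < j)%N -> psi (z i j) true true = 0.

Lemma cut_capacity_energy (S : {set node N}) : is_st_cut S ->
  cut_capacity (energy_graph x phi z psi obs) S = energy x phi z psi (cut_labels S).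
Proof.
case=> srcS snkS; set L := cut_labels S.
pose half00 i j := 2^-1 * psi (z i j) false false.
rewrite /energy_graph !cut_capacity_cat cut_capacity_sink_edges //.
rewrite cut_capacity_source_edges // (cut_capacity_flatten_pairs
  (fun i j => (i < j)%N && obs i j)).
have unary : \sum_(i < N) (if L i then phi (x i) true else 0)
    + \sum_(i < N) (if L i then 0 else
         phi (x i) false + 2^-1 * \sum_(j < N | j != i) psi (z i j) false false)
  = \sum_(i < N) phi (x i) (L i)
    + \sum_(i < N) \sum_(j < N | (i < j)%N)
        ((if L i then 0 else half00 i j) + (if L j then 0 else half00 i j)).
  have offdiag : \sum_(i < N) \sum_(j < N | j != i) (if L i then 0 else half00 i j)
      = \sum_(i < N) \sum_(j < N | (i < j)%N)
          ((if L i then 0 else half00 i j) + (if L j then 0 else half00 i j)).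
    rewrite sum_offdiag_pairs; apply: eq_bigr => i _; apply: eq_bigr => j _.
    by rewrite /half00 z_sym.
  rewrite -offdiag -!big_split /=; apply: eq_bigr => i _.
  case: (L i); first by rewrite addr0 big1 ?addr0.
  by rewrite add0r mulr_sumr.
have pairs : \sum_(i < N) \sum_(j < N | (i < j)%N && obs i j)
      cut_capacity (pair_edges z psi i j) S
    = \sum_(i < N) \sum_(j < N | (i < j)%N) pair_cut_cost (psi (z i j)) (L i) (L j).
  apply: eq_bigr => i _; rewrite [RHS](bigID (obs i)) /=.
  rewrite [X in _ = _ + X]big1 ?addr0 => [|j /andP[ij nobs]].
    by apply: eq_bigr => j _; rewrite cut_capacity_pair_edges.
  by rewrite /pair_cut_cost !psi_unobserved // mulr0 subr0 !if_same addr0.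
have binary : \sum_(i < N) \sum_(j < N | (i < j)%N) psi (z i j) (L i) (L j)
    = \sum_(i < N) \sum_(j < N | (i < j)%N)
        ((if L i then 0 else half00 i j) + (if L j then 0 else half00 i j))
      + \sum_(i < N) \sum_(j < N | (i < j)%N) pair_cut_cost (psi (z i j)) (L i) (L j).
  rewrite -big_split; apply: eq_bigr => i _; rewrite -big_split.
  by apply: eq_bigr => j ij; rewrite pair_potential_split ?psi11.
by rewrite addrA -/L unary pairs /energy binary addrA.
Qed.

End EnergyCut.

Theorem theorem1 (R : realFieldType) (N : nat) (X Z : Type)
  (x : 'I_N -> X) (phi : X -> bool -> R)
  (z : 'I_N -> 'I_N -> Z) (psi : Z -> bool -> bool -> R)
  (obs : 'I_N -> 'I_N -> bool)
  (HN : (1 <= N)%N)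
  (Hzsym : forall i j : 'I_N, z j i = z i j)
  (Hnoobs : forall i j : 'I_N, (i < j)%N -> ~~ obs i j ->
     forall a b : bool, psi (z i j) a b = 0)
  (Hpsi : forall i j : 'I_N, (i < j)%N ->
     [/\ psi (z i j) true true = 0,
         0 <= psi (z i j) false false,
         psi (z i j) false false <= psi (z i j) false true
       & psi (z i j) false false <= psi (z i j) true false])
  (S : {set node N}) :
  is_min_st_cut (energy_graph x phi z psi obs) S ->
  let Lstar := fun i : 'I_N => unode i \in S in
  (forall L : 'I_N -> bool, energy x phi z psi Lstar <= energy x phi z psi L) /\
  energy x phi z psi Lstar = cut_capacity (energy_graph x phi z psi obs) S.
Proof.
move=> [S_cut S_min] Lstar.
have psi11 (i j : 'I_N) (ij : (i < j)%N) : psi (z i j) true true = 0 by case: (Hpsi i j ij).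
have cap_energy := cut_capacity_energy x phi Hzsym Hnoobs psi11.
split=> [L|]; last by rewrite cap_energy.
have SL_cut := labels_cut_st L.
by rewrite -(eq_energy x phi z psi (labels_cutK L)) -!cap_energy //; apply: S_min.
Qed.
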